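(* Let $S_X,S_Y$ be finite nonempty action sets, $\varphi:S_X\times S_Y\to\mathbb{R}$, $\lambda\in[0,1)$, and let $\tau_X^+,\tau_X^-\in\Delta(S_X)$ satisfy $\max_{s_Y}\varphi(\tau_X^-,s_Y)\le0\le\min_{s_Y}\varphi(\tau_X^+,s_Y)$ together with $$\min_{s_Y}\varphi(\tau_X^+,s_Y)\ge(1-\lambda)\max_{s_Y}\varphi(\tau_X^+,s_Y)+\lambda\max_{s_Y}\varphi(\tau_X^-,s_Y),$$ $$\max_{s_Y}\varphi(\tau_X^-,s_Y)\le\lambda\min_{s_Y}\varphi(\tau_X^+,s_Y)+(1-\lambda)\min_{s_Y}\varphi(\tau_X^-,s_Y).$$ Then $X$ can enforce $\varphi\equiv0$ using a two-point reactive learning strategy (mixing $\tau_X^+$ and $\tau_X^-$), i.e., there is a $(\varphi,\lambda)$-autocratic two-point reactive learning strategy.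
   Context: Two players $X,Y$ play a repeated game with finite action sets $S_X,S_Y$; $\Delta(S)$ denotes the probability distributions on $S$; $\varphi(\tau_X,s_Y)=\mathbb{E}_{s_X\sim\tau_X}[\varphi(s_X,s_Y)]$; maxima/minima over $s_Y$ are over $S_Y$. Histories: $\mathcal{H}=\bigcup_{T\ge0}(S_X\times S_Y)^T$; behavioral strategies are maps $\sigma:\mathcal{H}\to\Delta(S)$; players independently draw actions each round from their strategies evaluated at the history of realized action pairs, with $\mathbb{E}_{\sigma_X,\sigma_Y}$ the expectation over the resulting play. $\sigma_X$ is $(\varphi,\lambda)$-autocratic if for every behavioral strategy $\sigma_Y$ of $Y$, $\mathbb{E}_{\sigma_X,\sigma_Y}[(1-\lambda)\sum_{t\ge0}\lambda^t\varphi(s_X^t,s_Y^t)]=0$. A two-point reactive learning strategy mixing $\tau_X^+,\tau_X^-$ is given by $p_0\in[0,1]$ and $p^*:[0,1]\times S_Y\to[0,1]$: it plays $p_0\tau_X^++(1-p_0)\tau_X^-$ in round $0$ and, if it played $p\tau_X^++(1-p)\tau_X^-$ in round $t$ and $Y$ played $s_Y$, it plays $p^*[p,s_Y]\tau_X^++(1-p^*[p,s_Y])\tau_X^-$ in round $t+1$. *)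

From HB Require Import structures.
From mathcomp Require Import all_boot all_order all_algebra.
From mathcomp Require Import all_classical all_reals topology normedtype sequences.
Set Implicit Arguments. Unset Strict Implicit. Unset Printing Implicit Defensive.
Import Order.TTheory GRing.Theory Num.Theory.
Import numFieldNormedType.Exports.
Local Open Scope classical_set_scope.
Local Open Scope ring_scope.

Section Game.
Variables (R : realType) (SX SY : finType).

Definition is_dist (S : finType) (tau : {ffun S -> R}) : Prop :=
  (forall s, 0 <= tau s) /\ \sum_(s : S) tau s = 1.

(* histories: sequences of realized action pairs, oldest first *)
Definition history := seq (SX * SY).

Definition phi_mix (phi : SX -> SY -> R) (tau : {ffun SX -> R}) (y : SY) : R :=
  \sum_(x : SX) tau x * phi x y.

(* max / min over s_Y in S_Y (S_Y assumed nonempty in the theorem) *)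
Definition max_phi (phi : SX -> SY -> R) (tau : {ffun SX -> R}) : R :=
  match [pick y : SY] with
  | Some y0 => \big[Num.max/phi_mix phi tau y0]_(y : SY) phi_mix phi tau y
  | None => 0 end.
Definition min_phi (phi : SX -> SY -> R) (tau : {ffun SX -> R}) : R :=
  match [pick y : SY] with
  | Some y0 => \big[Num.min/phi_mix phi tau y0]_(y : SY) phi_mix phi tau y
  | None => 0 end.

Fixpoint hist_prob_aux (sX : history -> {ffun SX -> R}) (sY : history -> {ffun SY -> R})
  (pre : history) (rest : history) : R :=
  match rest with
  | [::] => 1
  | (x, y) :: r => sX pre x * sY pre y * hist_prob_aux sX sY (rcons pre (x, y)) r
  end.
Definition hist_prob sX sY (h : history) : R := hist_prob_aux sX sY [::] h.

Definition stage_payoff (phi : SX -> SY -> R)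
  (sX : history -> {ffun SX -> R}) (sY : history -> {ffun SY -> R}) (t : nat) : R :=
  \sum_(h : t.-tuple (SX * SY))
     hist_prob sX sY h *
     (\sum_(x : SX) \sum_(y : SY) sX h x * sY h y * phi x y).

(* (phi, lambda)-autocratic: for every behavioral strategy of Y, the expected
   normalized discounted payoff E[(1-lambda) sum_t lambda^t phi(s^t)] equals 0,
   expressed as the series of expected discounted stage payoffs converging to 0
   (the sum converges absolutely, so this equals the expectation of the sum) *)
Definition autocratic (phi : SX -> SY -> R) (lam : R)
  (sX : history -> {ffun SX -> R}) : Prop :=
  forall sY : history -> {ffun SY -> R},
    (forall h, is_dist (sY h)) ->
    (fun n : nat => \sum_(0 <= t < n) (1 - lam) * lam ^+ t * stage_payoff phi sX sY t)
      @ \oo --> (0 : R).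

Definition rl_state (p0 : R) (pstar : R -> SY -> R) (h : history) : R :=
  foldl (fun p xy => pstar p xy.2) p0 h.

Definition two_point_strategy (taup taum : {ffun SX -> R}) (p0 : R)
  (pstar : R -> SY -> R) : history -> {ffun SX -> R} :=
  fun h => [ffun x => rl_state p0 pstar h * taup x
                      + (1 - rl_state p0 pstar h) * taum x].

End Game.

(* Write [Ap, Bp] and [Am, Bm] for the ranges of phi(tau+, .) and
   phi(tau-, .), and let [W q := Bm + q * (Ap - Bm)] be the value X promises
   while mixing tau+ with weight q.  X starts at the p0 with [W p0 = 0] and,
   after Y plays y, moves to the weight p' solving
   [W p = (1 - lam) * phi(p tau+ + (1 - p) tau-, y) + lam * W p'];
   the hypotheses say exactly that p' stays in [0, 1].  Then
   [E W(p_t) = (1 - lam) E phi(s^t) + lam E W(p_(t+1))] telescopes: the first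
   n discounted payoffs sum to [W p0 - lam^n E W(p_n)], and W is bounded. *)

From HB Require Import structures.
From mathcomp Require Import all_boot all_order all_algebra.
From mathcomp Require Import all_classical all_reals topology normedtype sequences.
From mathcomp Require Import ring lra.
Set Implicit Arguments. Unset Strict Implicit. Unset Printing Implicit Defensive.
Import Order.TTheory GRing.Theory Num.Theory.
Import numFieldNormedType.Exports.
Local Open Scope classical_set_scope.
Local Open Scope ring_scope.

Section BigTuple.
Variables (R : Type) (idx : R) (op : Monoid.com_law idx) (T : finType).

Lemma big_tuple0 (F : seq T -> R) : \big[op/idx]_(h : 0.-tuple T) F h = F [::].
Proof. by rewrite (big_pred1 [tuple]) // => h; apply/esym/eqP/tuple0. Qed.

Lemma big_tuple_cons n (F : seq T -> R) :
  \big[op/idx]_(h : n.+1.-tuple T) F h =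
  \big[op/idx]_(a : T) \big[op/idx]_(h : n.-tuple T) F (a :: h).
Proof.
rewrite pair_big (reindex (fun u : T * n.-tuple T => [tuple of u.1 :: u.2])) //=.
exists (fun t : n.+1.-tuple T => (thead t, [tuple of behead t])).
  by move=> [a h] _; congr pair; apply: val_inj.
by move=> t _; apply: val_inj; rewrite /= [in RHS](tuple_eta t).
Qed.

Lemma big_tuple_rcons n (F : seq T -> R) :
  \big[op/idx]_(h : n.+1.-tuple T) F h =
  \big[op/idx]_(h : n.-tuple T) \big[op/idx]_(a : T) F (rcons h a).
Proof.
elim: n F => [|n IH] F.
  rewrite big_tuple_cons (big_tuple0 (fun h => \big[op/idx]_a F (rcons h a))).
  by apply: eq_bigr => a _; rewrite (big_tuple0 (fun h => F (a :: h))).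
rewrite big_tuple_cons (big_tuple_cons _ (fun h => \big[op/idx]_a F (rcons h a))).
by apply: eq_bigr => a _; rewrite (IH (fun h => F (a :: h))).
Qed.

End BigTuple.

Section UpdateBounds.
Variable R : realFieldType.

Lemma divr_in01 (x d : R) : 0 <= x <= d -> 0 <= x / d <= 1.
Proof.
move=> /andP[x_ge0 x_le].
have [->|d_neq0] := eqVneq d 0; first by rewrite invr0 mulr0 lexx ler01.
have d_gt0 : 0 < d by rewrite lt_neqAle eq_sym d_neq0 (le_trans x_ge0).
by rewrite ler_pdivrMr // mul1r x_le divr_ge0 // ltW.
Qed.

Lemma mulr_div_bounded (x d : R) : 0 <= x <= d -> d * (x / d) = x.
Proof.
move=> /andP[x_ge0 x_le]; have [d0|d_neq0] := eqVneq d 0; last by rewrite mulrC divfK.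
by move: x_le; rewrite d0 mul0r => x_le0; apply/le_anti; rewrite x_ge0 x_le0.
Qed.

(* The middle term is [lam * (Ap - Bm)] times the update p' solving
   [Bm + p * (Ap - Bm) = (1 - lam) * m + lam * (Bm + p' * (Ap - Bm))]. *)
Lemma update_numerator_bounds (lam Ap Bp Am Bm a b p : R) :
  lam <= 1 -> (1 - lam) * Bp + lam * Bm <= Ap -> Bm <= lam * Ap + (1 - lam) * Am ->
  Ap <= a <= Bp -> Am <= b <= Bm -> 0 <= p <= 1 ->
  0 <= (1 - lam) * Bm + p * (Ap - Bm) - (1 - lam) * (p * a + (1 - p) * b)
    <= lam * (Ap - Bm).
Proof.
move=> lam_le1 h1 h2 /andP[a_ge a_le] /andP[b_ge b_le] /andP[p_ge0 p_le1].
have lamC_ge0 : 0 <= 1 - lam by rewrite subr_ge0.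
have pC_ge0 : 0 <= 1 - p by rewrite subr_ge0.
have m_le : p * a + (1 - p) * b <= p * Bp + (1 - p) * Bm.
  by rewrite lerD // ler_wpM2l.
have m_ge : p * Ap + (1 - p) * Am <= p * a + (1 - p) * b.
  by rewrite lerD // ler_wpM2l.
have := ler_wpM2l lamC_ge0 m_le; have := ler_wpM2l lamC_ge0 m_ge.
have : 0 <= p * (Ap - ((1 - lam) * Bp + lam * Bm)) by rewrite mulr_ge0 ?subr_ge0.
have : 0 <= (1 - p) * (lam * Ap + (1 - lam) * Am - Bm) by rewrite mulr_ge0 ?subr_ge0.
move=> *; apply/andP; split; nra.
Qed.

End UpdateBounds.

Section Expectation.
Variables (R : realType) (SX SY : finType).
Variables (sX : history SX SY -> {ffun SX -> R}) (sY : history SX SY -> {ffun SY -> R}).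

Definition round_expect (h : history SX SY) (g : SX -> SY -> R) : R :=
  \sum_x \sum_y sX h x * sY h y * g x y.

Definition hist_expect n (f : history SX SY -> R) : R :=
  \sum_(h : n.-tuple (SX * SY)) hist_prob sX sY h * f h.

Lemma stage_payoffE phi t :
  stage_payoff phi sX sY t = hist_expect t (fun h => round_expect h phi).
Proof. by []. Qed.

Lemma hist_prob_aux_rcons pre h x y :
  hist_prob_aux sX sY pre (rcons h (x, y)) =
  hist_prob_aux sX sY pre h * (sX (pre ++ h) x * sY (pre ++ h) y).
Proof.
elim: h pre => [|[a b] h IH] pre /=; first by rewrite cats0 mulr1 mul1r.
by rewrite IH cat_rcons mulrA.
Qed.

Lemma hist_expectS n f :
  hist_expect n.+1 f = hist_expect n (fun h => round_expect h (fun x y => f (rcons h (x, y)))).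
Proof.
rewrite /hist_expect (big_tuple_rcons _ n (fun h => hist_prob sX sY h * f h)).
apply: eq_bigr => h _; rewrite /round_expect mulr_sumr.
under [RHS]eq_bigr do rewrite mulr_sumr.
rewrite pair_big; apply: eq_bigr => -[x y] _.
by rewrite /hist_prob hist_prob_aux_rcons !mulrA.
Qed.

Lemma round_expect_lin h a b g k :
  round_expect h (fun x y => a * g x y + b * k x y) =
  a * round_expect h g + b * round_expect h k.
Proof.
rewrite /round_expect !mulr_sumr -big_split; apply: eq_bigr => x _.
by rewrite !mulr_sumr -big_split; apply: eq_bigr => y _ /=; ring.
Qed.

Lemma hist_expect_lin n a b f g :
  hist_expect n (fun h => a * f h + b * g h) = a * hist_expect n f + b * hist_expect n g.
Proof.
by rewrite /hist_expect !mulr_sumr -big_split; apply: eq_bigr => h _ /=; ring.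
Qed.

Lemma hist_expect0 f : hist_expect 0 f = f [::].
Proof. by rewrite /hist_expect (big_tuple0 _ (fun h => hist_prob sX sY h * f h)) mul1r. Qed.

Hypotheses (sX_dist : forall h, is_dist (sX h)) (sY_dist : forall h, is_dist (sY h)).

Lemma round_expect_cst h c : round_expect h (fun _ _ => c) = c.
Proof.
rewrite /round_expect -[RHS]mul1r -(proj2 (sX_dist h)) mulr_suml.
by apply: eq_bigr => x _; rewrite -mulr_suml -mulr_sumr (proj2 (sY_dist h)) mulr1.
Qed.

Lemma hist_prob_ge0 h : 0 <= hist_prob sX sY h.
Proof.
rewrite /hist_prob; elim: h [::] => [|[x y] h IH] pre /=; first exact: ler01.
by rewrite !mulr_ge0 // ?(proj1 (sX_dist _)) ?(proj1 (sY_dist _)).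
Qed.

Lemma hist_expect_cst n c : hist_expect n (fun _ => c) = c.
Proof.
elim: n => [|n IH]; first exact: hist_expect0.
by rewrite hist_expectS -[RHS]IH; apply: eq_bigr => h _; rewrite round_expect_cst.
Qed.

Lemma hist_expect_norm_le n f M :
  (forall h, `|f h| <= M) -> `|hist_expect n f| <= M.
Proof.
move=> f_le; rewrite -[M](hist_expect_cst n); apply: (le_trans (ler_norm_sum _ _ _)).
apply: ler_sum => h _; rewrite normrM ger0_norm ?hist_prob_ge0 //.
by rewrite ler_wpM2l ?hist_prob_ge0.
Qed.

Section Telescoping.
Variables (phi : SX -> SY -> R) (lam : R) (V : history SX SY -> R).
Hypothesis V_step : forall h,
  round_expect h (fun x y => (1 - lam) * phi x y + lam * V (rcons h (x, y))) = V h.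

Lemma hist_expect_value_step n :
  hist_expect n V = (1 - lam) * stage_payoff phi sX sY n + lam * hist_expect n.+1 V.
Proof.
rewrite stage_payoffE hist_expectS -hist_expect_lin.
by apply: eq_bigr => h _; rewrite -round_expect_lin V_step.
Qed.

Lemma discounted_partial_sum n :
  \sum_(0 <= t < n) (1 - lam) * lam ^+ t * stage_payoff phi sX sY t =
  V [::] - lam ^+ n * hist_expect n V.
Proof.
elim: n => [|n IH]; first by rewrite big_geq // hist_expect0 expr0 mul1r subrr.
by rewrite big_nat_recr //= IH (hist_expect_value_step n) exprS; ring.
Qed.

Lemma discounted_payoff_cvg (M : R) : 0 <= lam < 1 -> (forall h, `|V h| <= M) ->
  (fun n => \sum_(0 <= t < n) (1 - lam) * lam ^+ t * stage_payoff phi sX sY t)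
    @ \oo --> V [::].
Proof.
move=> /andP[lam_ge0 lam_lt1] V_le; rewrite (eq_cvg _ _ discounted_partial_sum).
suff tail_cvg : (fun n => lam ^+ n * hist_expect n V) @ \oo --> (0 : R).
  by rewrite -{2}(subr0 (V [::])); apply: cvgB => //; exact: cvg_cst.
have lamn_cvg : (fun n => M * lam ^+ n) @ \oo --> (0 : R).
  by rewrite -(mulr0 M); apply: cvgMl_tmp; apply: cvg_expr; rewrite ger0_norm.
apply: (@squeeze_cvgr _ _ _ _ (fun n => - (M * lam ^+ n)) (fun n => M * lam ^+ n)).
- apply: nearW => n; rewrite -ler_norml normrM ger0_norm ?exprn_ge0 // mulrC.
  by rewrite ler_wpM2r ?exprn_ge0 // hist_expect_norm_le.
- by rewrite -oppr0; apply: cvgN.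
- exact: lamn_cvg.
Qed.

End Telescoping.

End Expectation.

Section TwoPoint.
Variables (R : realType) (SX SY : finType) (phi : SX -> SY -> R).

Lemma phi_mix_le_max_phi tau y : phi_mix phi tau y <= max_phi phi tau.
Proof. by rewrite /max_phi; case: pickP => [y0 _|/(_ y) //]; exact: le_bigmax. Qed.

Lemma min_phi_le_phi_mix tau y : min_phi phi tau <= phi_mix phi tau y.
Proof. by rewrite /min_phi; case: pickP => [y0 _|/(_ y) //]; exact: bigmin_le. Qed.

Variables (taup taum : {ffun SX -> R}) (lam p0 : R) (pstar : R -> SY -> R).
Hypotheses (taup_dist : is_dist taup) (taum_dist : is_dist taum).
Hypotheses (p0_in01 : 0 <= p0 <= 1)
  (pstar_in01 : forall p y, 0 <= p <= 1 -> 0 <= pstar p y <= 1).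

Local Notation sX := (two_point_strategy taup taum p0 pstar).
Local Notation state := (@rl_state R SX SY p0 pstar).

Lemma rl_state_in01 h : 0 <= state h <= 1.
Proof.
rewrite /rl_state; elim: h p0 p0_in01 => [|[x y] h IH] p p_in01 //=.
exact/IH/pstar_in01.
Qed.

Lemma two_point_strategy_dist h : is_dist (sX h).
Proof.
have /andP[s_ge0 s_le1] := rl_state_in01 h.
split=> [x|]; rewrite ?ffunE.
  by rewrite addr_ge0 ?mulr_ge0 ?subr_ge0 ?(proj1 taup_dist) ?(proj1 taum_dist).
under eq_bigr do rewrite ffunE.
by rewrite big_split /= -!mulr_sumr (proj2 taup_dist) (proj2 taum_dist); ring.
Qed.

Lemma phi_mix_two_point h y :
  phi_mix phi (sX h) y =
  state h * phi_mix phi taup y + (1 - state h) * phi_mix phi taum y.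
Proof.
rewrite /phi_mix !mulr_sumr -big_split; apply: eq_bigr => x _ /=.
by rewrite ffunE; ring.
Qed.

Theorem two_point_autocratic (W : R -> R) (M : R) :
  0 <= lam < 1 -> W p0 = 0 -> (forall p, 0 <= p <= 1 -> `|W p| <= M) ->
  (forall p y, 0 <= p <= 1 ->
     W p = (1 - lam) * (p * phi_mix phi taup y + (1 - p) * phi_mix phi taum y)
           + lam * W (pstar p y)) ->
  autocratic phi lam sX.
Proof.
move=> lam01 W_p0 W_le W_step sY sY_dist.
have V_step h : round_expect sX sY h
    (fun x y => (1 - lam) * phi x y + lam * W (state (rcons h (x, y)))) = W (state h).
  rewrite /round_expect exchange_big /=.
  rewrite -[RHS]mul1r -[in RHS](proj2 (sY_dist h)) mulr_suml; apply: eq_bigr => y _.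
  rewrite (eq_bigr (fun x => sY h y * (1 - lam) * (sX h x * phi x y)
                             + sY h y * lam * W (pstar (state h) y) * sX h x)).
    rewrite big_split -!mulr_sumr /= (proj2 (two_point_strategy_dist h)).
    rewrite (W_step _ y (rl_state_in01 h)) -phi_mix_two_point /phi_mix; ring.
  by move=> x _; rewrite /rl_state foldl_rcons; ring.
have := discounted_payoff_cvg two_point_strategy_dist sY_dist V_step lam01
  (fun h => W_le _ (rl_state_in01 h)).
by rewrite /= W_p0.
Qed.

End TwoPoint.

Theorem corollary1 (R : realType) (SX SY : finType)
  (hX : (0 < #|SX|)%N) (hY : (0 < #|SY|)%N)
  (phi : SX -> SY -> R) (lam : R) (hlam0 : 0 <= lam) (hlam1 : lam < 1)
  (taup taum : {ffun SX -> R})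
  (hp : is_dist taup) (hm : is_dist taum)
  (h0 : max_phi phi taum <= 0) (h0' : 0 <= min_phi phi taup)
  (h1 : min_phi phi taup >= (1 - lam) * max_phi phi taup + lam * max_phi phi taum)
  (h2 : max_phi phi taum <= lam * min_phi phi taup + (1 - lam) * min_phi phi taum) :
  exists (p0 : R) (pstar : R -> SY -> R),
    [/\ 0 <= p0 <= 1,
        (forall p y, 0 <= p <= 1 -> 0 <= pstar p y <= 1) &
        autocratic phi lam (two_point_strategy taup taum p0 pstar)].
Proof.
move: h0 h0' h1 h2; set Ap := min_phi _ taup; set Bp := max_phi _ taup.
set Am := min_phi _ taum; set Bm := max_phi _ taum => h0 h0' h1 h2.
pose W q := Bm + q * (Ap - Bm).
pose N p y := (1 - lam) * Bm + p * (Ap - Bm) -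
  (1 - lam) * (p * phi_mix phi taup y + (1 - p) * phi_mix phi taum y).
have N_bounds p y : 0 <= p <= 1 -> 0 <= N p y <= lam * (Ap - Bm).
  apply: (@update_numerator_bounds _ lam Ap Bp Am Bm) => //; first exact: ltW.
    by rewrite /Ap /Bp min_phi_le_phi_mix phi_mix_le_max_phi.
  by rewrite /Am /Bm min_phi_le_phi_mix phi_mix_le_max_phi.
have p0_in01 : 0 <= - Bm / (Ap - Bm) <= 1.
  by apply: divr_in01; rewrite oppr_ge0 h0 lerDr.
(* If [lam * (Ap - Bm) = 0] then [N p y = 0], so the junk value [x / 0 = 0]
   still gives a valid update. *)
pose pstar p y := N p y / (lam * (Ap - Bm)).
have pstar_in01 p y : 0 <= p <= 1 -> 0 <= pstar p y <= 1.
  by move=> /(N_bounds p y)/divr_in01.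
exists (- Bm / (Ap - Bm)), pstar; split=> //.
apply: (two_point_autocratic hp hm p0_in01 pstar_in01 (W := W) (M := `|Bm| + `|Ap - Bm|)).
- by rewrite hlam0 hlam1.
- by rewrite /W mulrC mulr_div_bounded ?addrN // oppr_ge0 h0 lerDr.
- move=> p /andP[p_ge0 p_le1]; rewrite (le_trans (ler_normD _ _)) // lerD2l normrM.
  by rewrite ger0_norm // ler_piMl.
- move=> p y /(N_bounds p y)/mulr_div_bounded N_eq.
  have -> : lam * W (pstar p y) = lam * Bm + N p y by rewrite -N_eq /W /pstar; ring.
  by rewrite /W /N; ring.
Qed.
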